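(* Let $p\in(0,1)$, let $k$ be a positive integer, and let $u_1\ge u_2\ge\dots\ge u_{3k}\ge0$. Then $$\Big(\sum_{i=k+1}^{3k}u_i^2\Big)^{1/2}\le C_1(p)k^{\frac12-\frac1p}\Big(\sum_{i=1}^{2k}u_i^p\Big)^{1/p},\qquad C_1(p)=\begin{cases}(\frac p2)^{\frac12}\big(\frac{2}{2-p}\big)^{\frac12-\frac1p}, & p\in(0,p^{\star}],\\ 2^{\frac12-\frac1p}, & p\in(p^{\star},1).\end{cases}$$
   Context: $p^{\star}\approx0.45418$ is the unique solution in $(0,1]$ of $(\frac{p}{2})^{1/2}(2-p)^{\frac1p-\frac12}=1$. *)

(* R : realType, real powers via powR (`^),
   which satisfies 0 `^ p = 0 for p <> 0. *)
From HB Require Import structures.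
From mathcomp Require Import all_boot all_order all_algebra.
From mathcomp Require Import all_classical all_reals all_analysis.
Set Implicit Arguments. Unset Strict Implicit. Unset Printing Implicit Defensive.
Import Order.TTheory GRing.Theory Num.Theory.
Local Open Scope ring_scope.
Local Open Scope classical_set_scope.

Definition pstar_fun {R : realType} (p : R) : R :=
  (p / 2) `^ (2^-1) * (2 - p) `^ (p^-1 - 2^-1).

(* p* = the unique solution in (0,1] of pstar_fun p = 1
   (chosen by xget among the solutions; the context asserts uniqueness). *)
Definition pstar {R : realType} : R :=
  xget 0 [set p : R | 0 < p <= 1 /\ pstar_fun p = 1].

Definition C1 {R : realType} (p : R) : R :=
  if p <= pstar then (p / 2) `^ (2^-1) * (2 / (2 - p)) `^ (2^-1 - p^-1)
  else 2 `^ (2^-1 - p^-1).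

(* Write M = u_(k+1), c = u_(2k) and q = 2/p.  The last block contributes at most
   k c^2 and the first block at least k M^p to the p-sum.  On the middle block
   t |-> t^q is convex, so u_i^2 = (u_i^p)^q lies below the chord through c^p and
   M^p; averaging and normalising by M^p reduces the claim to the scalar inequality
   a + (2 - a) w^q <= C^2 (1 + w + (1 - w) a)^q  for a, w in [0, 1].
   Minkowski's inequality in the plane bounds the left side by
   ((1 - w) a^(1/q) + w 2^(1/q))^q, and the two terms are controlled by
   a^(p/2) <= C_low^p (1 + a) (weighted AM-GM) and 2^(p/2) = 2 C_high^p, where
   C_low and C_high are the two branches of C_1.  Finally C_1 = max(C_low, C_high):
   C_low = C_high f with f = pstar_fun, and f is decreasing on (0, 1] because
   ln f(1/s) + ln 2 / 2 = (2s-1) ln(2s-1) / 2 - s ln s is increasing for s >= 1,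
   by convexity of x ln x. *)

From HB Require Import structures.
From mathcomp Require Import all_boot all_order all_algebra.
From mathcomp Require Import all_classical all_reals all_analysis.
From mathcomp Require Import ring lra zify.
Import Order.TTheory GRing.Theory Num.Theory.
Import numFieldNormedType.Exports.
Local Open Scope ring_scope.

Section PowerInequalities.
Context {R : realType}.
Implicit Types (a b q r x y w l : R).

Lemma ler_powRl r x y : 0 <= r -> 0 <= x -> x <= y -> x `^ r <= y `^ r.
Proof.
by move=> r0 x0 xy; apply: ge0_ler_powR; rewrite ?nnegrE // (le_trans x0).
Qed.

Lemma powRK q x : q != 0 -> 0 <= x -> (x `^ q) `^ q^-1 = x.
Proof. by move=> q0 x0; rewrite -powRrM mulfV // powRr1. Qed.

Lemma powRVK q x : q != 0 -> 0 <= x -> (x `^ q^-1) `^ q = x.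
Proof. by move=> q0 x0; rewrite -powRrM mulVf // powRr1. Qed.

Lemma powRV r x : 0 < x -> x^-1 `^ r = (x `^ r)^-1.
Proof. by move=> x0; rewrite -powR_inv1 ?(ltW x0) // -powRrM mulN1r powRN. Qed.

Lemma powR_div r x y : 0 <= x -> 0 < y -> (x / y) `^ r = x `^ r / y `^ r.
Proof. by move=> x0 y0; rewrite powRM ?invr_ge0 ?(ltW y0) // powRV. Qed.

Lemma powR_powR_div (n : nat) r x : r != 0 -> 0 <= x ->
  (x `^ r) `^ (n%:R / r) = x ^+ n.
Proof. by move=> r0 x0; rewrite -powRrM mulrC divfK // powR_mulrn. Qed.

Lemma powR_convex q l x y : 1 <= q -> 0 <= l <= 1 -> 0 <= x -> 0 <= y ->
  (l * x + (1 - l) * y) `^ q <= l * x `^ q + (1 - l) * y `^ q.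
Proof.
move=> q1 /andP[l0 l1] x0 y0.
have := @convex_powR R q q1 (Itv01 l0 l1) x y.
by rewrite !inE /= !in_itv /= !andbT !convRE => /(_ x0 y0).
Qed.

(* For a = b the slope is 0 / 0 = 0, and then x = a. *)
Lemma powR_le_chord q a b x : 1 <= q -> 0 <= a -> a <= x -> x <= b ->
  x `^ q <= a `^ q + (b `^ q - a `^ q) / (b - a) * (x - a).
Proof.
move=> q1 a0 ax xb.
have [ab|] := eqVneq a b.
  have -> : x = a by apply/eqP; rewrite eq_le ax ab xb.
  by rewrite subrr mulr0 addr0.
rewrite eq_sym -subr_eq0 => ba0.
have ba : 0 < b - a by rewrite lt0r ba0 subr_ge0 (le_trans ax).
set l := (b - x) / (b - a).
have l01 : 0 <= l <= 1.
  by rewrite /l divr_ge0 ?(ltW ba) ?subr_ge0 //= ler_pdivrMr // mul1r; lra.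
have b0 : 0 <= b by rewrite (le_trans a0) // (le_trans ax).
have := @powR_convex q l a b q1 l01 a0 b0.
have -> : l * a + (1 - l) * b = x by rewrite /l; field.
by move/le_trans; apply; rewrite le_eqVlt /l; apply/orP; left; apply/eqP; field.
Qed.

Lemma minkowski2 q a1 a2 b1 b2 : 1 <= q ->
  0 <= a1 -> 0 <= a2 -> 0 <= b1 -> 0 <= b2 ->
  (a1 + b1) `^ q + (a2 + b2) `^ q <=
  ((a1 `^ q + a2 `^ q) `^ q^-1 + (b1 `^ q + b2 `^ q) `^ q^-1) `^ q.
Proof.
move=> q1 a10 a20 b10 b20.
have q0 : q != 0 by rewrite gt_eqF // (lt_le_trans ltr01).
have normK x y : 0 <= x -> 0 <= y -> ((x `^ q + y `^ q) `^ q^-1) `^ q = x `^ q + y `^ q.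
  by move=> x0 y0; rewrite powRVK // addr_ge0 // powR_ge0.
have norm0 x y : 0 <= x -> 0 <= y -> (x `^ q + y `^ q) `^ q^-1 = 0 -> x = 0 /\ y = 0.
  move=> x0 y0 /(congr1 (@powR R ^~ q)); rewrite normK // powR0 // => /eqP.
  by rewrite paddr_eq0 ?powR_ge0 // !powR_eq0 q0 !andbT => /andP[/eqP-> /eqP->].
set A := (a1 `^ q + a2 `^ q) `^ q^-1; set B := (b1 `^ q + b2 `^ q) `^ q^-1.
have [A0|Aneq0] := eqVneq A 0.
  by have [-> ->] := norm0 _ _ a10 a20 A0; rewrite A0 !add0r normK.
have [B0|Bneq0] := eqVneq B 0.
  by have [-> ->] := norm0 _ _ b10 b20 B0; rewrite B0 !addr0 normK.
have Aq : A `^ q = a1 `^ q + a2 `^ q by rewrite normK.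
have Bq : B `^ q = b1 `^ q + b2 `^ q by rewrite normK.
have A0 : 0 < A by rewrite lt0r Aneq0 powR_ge0.
have B0 : 0 < B by rewrite lt0r Bneq0 powR_ge0.
clearbody A B.
have AB0 : 0 < A + B by rewrite addr_gt0.
(* (x + y) / (A + B) is the convex combination of x / A and y / B
   with weights A / (A + B) and B / (A + B). *)
have coord x y : 0 <= x -> 0 <= y ->
    (x + y) `^ q / (A + B) `^ q <=
    A / (A + B) * (x `^ q / A `^ q) + B / (A + B) * (y `^ q / B `^ q).
  move=> x0 y0; rewrite -!powR_div ?addr_ge0 //.
  have -> : B / (A + B) = 1 - A / (A + B) by field; rewrite gt_eqF.
  have -> : (x + y) / (A + B) = A / (A + B) * (x / A) + (1 - A / (A + B)) * (y / B).
    by field; rewrite !gt_eqF.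
  have l01 : 0 <= A / (A + B) <= 1.
    by rewrite divr_ge0 ?(ltW A0) ?(ltW AB0) //= ler_pdivrMr // mul1r lerDl ltW.
  by apply: powR_convex; rewrite // divr_ge0 // ltW.
have normalized C x y : 0 < C -> C `^ q = x `^ q + y `^ q ->
    x `^ q / C `^ q + y `^ q / C `^ q = 1.
  by move=> C0 Cq; rewrite -mulrDl -Cq divff // gt_eqF // powR_gt0.
have := lerD (coord _ _ a10 b10) (coord _ _ a20 b20).
rewrite [X in _ <= X -> _](_ : _ = A / (A + B) * (a1 `^ q / A `^ q + a2 `^ q / A `^ q)
   + B / (A + B) * (b1 `^ q / B `^ q + b2 `^ q / B `^ q)); last by ring.
rewrite (normalized A) // (normalized B) // !mulr1 -!mulrDl divff ?gt_eqF //.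
by rewrite ler_pdivrMr ?mul1r // powR_gt0.
Qed.

Lemma powR_add_mul_le q x y w : 1 <= q -> 0 <= x -> 0 <= y -> 0 <= w <= 1 ->
  x + y * w `^ q <= ((1 - w) * x `^ q^-1 + w * (x + y) `^ q^-1) `^ q.
Proof.
move=> q1 x0 y0 /andP[w0 w1].
have q0 : q != 0 by rewrite gt_eqF // (lt_le_trans ltr01).
have w'0 : 0 <= 1 - w by rewrite subr_ge0.
set X := x `^ q^-1; set Y := y `^ q^-1.
have X0 : 0 <= X := powR_ge0 _ _.
have Y0 : 0 <= Y := powR_ge0 _ _.
have := @minkowski2 q ((1 - w) * X) 0 (w * X) (w * Y) q1 (mulr_ge0 w'0 X0) (lexx 0) (mulr_ge0 w0 X0) (mulr_ge0 w0 Y0).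
rewrite -mulrDl subrK mul1r add0r powR0 // addr0 powRK ?mulr_ge0 //.
rewrite !powRM // !powRVK // -mulrDr powRM ?powR_ge0 ?addr_ge0 // powRK //.
by rewrite mulrC.
Qed.

Lemma ler_weighted_amgm l a b : 0 < l < 1 -> 0 <= a -> 0 <= b ->
  a `^ l * b `^ (1 - l) <= l * a + (1 - l) * b.
Proof.
move=> /andP[l0 l1] a0 b0.
have l'0 : 0 < 1 - l by rewrite subr_gt0.
have := @conjugate_powR R (a `^ l) (b `^ (1 - l)) l^-1 (1 - l)^-1
  (powR_ge0 _ _) (powR_ge0 _ _) (ltac:(by rewrite invr_gt0)) (ltac:(by rewrite invr_gt0)).
rewrite !invrK subrKC => /(_ erefl).
by rewrite -!powRrM !mulfV ?gt_eqF // !powRr1 // (mulrC a) (mulrC b).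
Qed.

End PowerInequalities.

Section PstarFunction.
Context {R : realType}.
Implicit Types (a b d l m s x y z p : R).

Definition xlnx x := x * ln x.

Lemma xlnx_tangent m z : 0 < m -> 0 < z -> xlnx m + (ln m + 1) * (z - m) <= xlnx z.
Proof.
move=> m0 z0.
have := @le_ln1Dx R (m / z - 1); rewrite subrKC ltrBrDl subrr divr_gt0 // => /(_ isT).
rewrite ln_div ?posrE // => /(ler_wpM2l (ltW z0)).
rewrite /xlnx mulrBr mulrBr mulr1 mulrCA divff ?gt_eqF // mulr1; lra.
Qed.

Lemma xlnx_convex l x y : 0 <= l <= 1 -> 0 < x -> 0 < y ->
  xlnx (l * x + (1 - l) * y) <= l * xlnx x + (1 - l) * xlnx y.
Proof.
move=> /andP[l0 l1] x0 y0; set m := l * x + (1 - l) * y.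
have m0 : 0 < m by rewrite /m; nra.
have tx := ler_wpM2l l0 (@xlnx_tangent m x m0 x0).
have ty := ler_wpM2l (ltac:(lra) : 0 <= 1 - l) (@xlnx_tangent m y m0 y0).
have : l * (x - m) + (1 - l) * (y - m) = 0 by rewrite /m; ring.
move: tx ty; rewrite !mulrDr; nra.
Qed.

Lemma xlnx_increments a b d : 0 < a -> a <= b -> 0 <= d ->
  xlnx (a + d) + xlnx b <= xlnx a + xlnx (b + d).
Proof.
move=> a0 ab d0.
have [->|dneq0] := eqVneq d 0; first by rewrite !addr0 addrC.
have D0 : 0 < b + d - a by rewrite lt0r; lra.
set l := d / (b + d - a).
have l01 : 0 <= l <= 1.
  by rewrite divr_ge0 ?(ltW D0) //= ler_pdivrMr // mul1r; lra.
have l'01 : 0 <= 1 - l <= 1 by lra.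
have bd0 : 0 < b + d by lra.
have := @xlnx_convex l a (b + d) l01 a0 bd0.
have := @xlnx_convex (1 - l) a (b + d) l'01 a0 bd0.
have -> : l * a + (1 - l) * (b + d) = b by rewrite /l; field; rewrite gt_eqF.
have -> : (1 - l) * a + (1 - (1 - l)) * (b + d) = a + d.
  by rewrite /l; field; rewrite gt_eqF.
lra.
Qed.

Definition pstar_log s := xlnx (2 * s - 1) / 2 - xlnx s.

Lemma ln_pstar_fun p : 0 < p <= 1 -> ln (pstar_fun p) = pstar_log p^-1 - ln 2 / 2.
Proof.
move=> /andP[p0 p1].
have q0 : 0 < 2 * p^-1 - 1.
  have : 1 <= p^-1 by rewrite invf_ge1.
  lra.
rewrite /pstar_fun (_ : 2 - p = p * (2 * p^-1 - 1)); last by field; rewrite gt_eqF.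
rewrite lnM ?posrE ?powR_gt0 ?divr_gt0 ?mulr_gt0 //.
rewrite !ln_powR ln_div ?lnM ?posrE // /pstar_log /xlnx lnV ?posrE //.
by field; rewrite gt_eqF.
Qed.

Lemma pstar_fun_gt0 p : 0 < p < 2 -> 0 < pstar_fun p.
Proof.
by move=> /andP[p0 p2]; rewrite mulr_gt0 // powR_gt0 ?divr_gt0 ?subr_gt0.
Qed.

(* The increase of xlnx over [2s - 1, 2s' - 1] is at least twice that over [s, s']:
   both of its halves have length s' - s and start to the right of s. *)
Lemma ler_pstar_log s s' : 1 <= s -> s <= s' -> pstar_log s <= pstar_log s'.
Proof.
move=> s1 ss'.
have s0 : 0 < s by lra.
have := @xlnx_increments s (2 * s - 1) (s' - s) s0 ltac:(lra) ltac:(lra).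
have := @xlnx_increments s (2 * s - 1 + (s' - s)) (s' - s) s0 ltac:(lra) ltac:(lra).
have -> : 2 * s - 1 + (s' - s) + (s' - s) = 2 * s' - 1 by ring.
rewrite /pstar_log (addrC s) subrK; lra.
Qed.

Lemma pstar_fun_antitone p1 p2 : 0 < p1 -> p1 <= p2 -> p2 <= 1 ->
  pstar_fun p2 <= pstar_fun p1.
Proof.
move=> p10 p12 p21.
have p20 : 0 < p2 by apply: lt_le_trans p12.
rewrite -ler_ln ?posrE ?pstar_fun_gt0 ?p10 ?p20 //=; try lra.
rewrite !ln_pstar_fun ?p10 ?p20 //=; last lra.
by rewrite lerD2r ler_pstar_log ?invf_ge1 // lef_pV2 ?posrE.
Qed.

Lemma continuous_pstar_log s : 1 <= s -> {for s, continuous pstar_log}.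
Proof.
move=> s1.
have xlnx_cont x : 0 < x -> {for x, continuous xlnx}.
  by move=> x0; apply: continuousM; [exact: cvg_id | exact: continuous_ln].
apply: continuousB; last by apply: xlnx_cont; lra.
apply: continuousM; last exact: cvg_cst.
apply: (continuous_comp _ (xlnx_cont _ _)); last lra.
by apply: continuousB; [apply: continuousM; [exact: cvg_cst | exact: cvg_id] | exact: cvg_cst].
Qed.

Lemma pstar_log1 : pstar_log 1 = 0.
Proof. by rewrite /pstar_log /xlnx !mulr1 (_ : 2 - 1 = 1 :> R) ?ln1 ?mulr0 ?mul0r ?subr0 //; lra. Qed.

Lemma pstar_log3 : ln 2 / 2 <= pstar_log 3.
Proof.
have ln_ineq : ln ((3 : R) ^+ 6 * 2) <= ln ((5 : R) ^+ 5).
  by rewrite ler_ln ?posrE; lra.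
rewrite lnM in ln_ineq; last 2 first.
- by rewrite posrE; apply: exprn_gt0; lra.
- by rewrite posrE; lra.
rewrite (@lnXn R 6 3) in ln_ineq; last lra.
rewrite (@lnXn R 5 5) in ln_ineq; last lra.
rewrite -[ln (R:=R) 3 *+ 6]mulr_natr -[ln (R:=R) 5 *+ 5]mulr_natr in ln_ineq.
rewrite /pstar_log /xlnx (_ : 2 * 3 - 1 = 5 :> R); last lra.
lra.
Qed.

Lemma exists_pstar : exists p : R, 0 < p <= 1 /\ pstar_fun p = 1.
Proof.
have [s] : exists2 s : R, s \in `[1, 3] & pstar_log s = ln 2 / 2.
  apply: IVT; first lra.
    apply: continuous_in_subspaceT => x; rewrite inE /= in_itv /= => /andP[x1 _].
    exact: continuous_pstar_log.
  rewrite ge_min le_max pstar_log1 pstar_log3 orbT andbT.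
  by rewrite divr_ge0 ?ln_ge0 //; lra.
rewrite in_itv /= => /andP[s1 s3] hs.
have s0 : 0 < s by lra.
have si01 : 0 < s^-1 <= 1 by rewrite invr_gt0 s0 invf_le1.
exists s^-1; split => //.
apply/eqP; rewrite -ln_eq0 ?pstar_fun_gt0 //; last by move: si01; lra.
by rewrite ln_pstar_fun // invrK hs subrr.
Qed.

Lemma pstarP : 0 < (pstar : R) <= 1 /\ pstar_fun (pstar : R) = 1.
Proof. exact: (xgetPex 0 exists_pstar). Qed.

End PstarFunction.

Section ConstantC1.
Context {R : realType}.
Implicit Types (p x : R).

Definition C1_low p : R := (p / 2) `^ (2^-1) * (2 / (2 - p)) `^ (2^-1 - p^-1).
Definition C1_high p : R := 2 `^ (2^-1 - p^-1).

Lemma C1_lowE p : p < 2 -> C1_low p = C1_high p * pstar_fun p.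
Proof.
move=> p2.
rewrite /C1_low /C1_high /pstar_fun (@powRM _ 2 (2 - p)^-1) ?invr_ge0; [|lra|lra].
by rewrite powRV ?subr_gt0 // -powRN opprB mulrCA mulrA.
Qed.

Lemma C1E p : 0 < p < 1 -> C1 p = Num.max (C1_low p) (C1_high p).
Proof.
move=> /andP[p0 p1].
have [/andP[ps0 ps1] ps] := @pstarP R.
have C1_high0 : 0 <= C1_high p by apply: powR_ge0.
rewrite /C1 -/(C1_low p) -/(C1_high p) C1_lowE; last lra.
case: ifP => hp.
  rewrite max_l // ler_peMr // -ps.
  exact: pstar_fun_antitone.
rewrite max_r // ler_piMr // -ps pstar_fun_antitone //; last lra.
by rewrite ltW // ltNge hp.
Qed.

Lemma C1_low_powR p : 0 < p < 2 ->
  C1_low p `^ p = (p / 2) `^ (p / 2) * (1 - p / 2) `^ (1 - p / 2).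
Proof.
move=> /andP[p0 p2].
have p'2 : 0 < 2 - p by rewrite subr_gt0.
rewrite /C1_low powRM ?powR_ge0 // -!powRrM.
rewrite (_ : 2 / (2 - p) = (1 - p / 2)^-1); last by field; rewrite gt_eqF.
rewrite (_ : (2^-1 - p^-1) * p = - (1 - p / 2)); last by field; rewrite gt_eqF.
by rewrite powRV ?powRN ?invrK 1?(mulrC 2^-1) //; lra.
Qed.

Lemma C1_ge0 p : 0 < p < 1 -> 0 <= C1 p.
Proof. by move=> p01; rewrite C1E // le_max powR_ge0 orbT. Qed.

Lemma powR_half_le_C1_low p x : 0 < p < 2 -> 0 <= x ->
  x `^ (p / 2) <= C1_low p `^ p * (1 + x).
Proof.
move=> p02 x0; have /andP[p0 p2] := p02.
rewrite C1_low_powR //; set l := p / 2.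
have l01 : 0 < l < 1 by rewrite /l; apply/andP; split; lra.
have l0 : 0 < l by lra.
have l'0 : 0 < 1 - l by lra.
have l'V0 : 0 <= (1 - l)^-1 by rewrite invr_ge0 ltW.
have := @ler_weighted_amgm R l (x / l) (1 - l)^-1 l01 (divr_ge0 x0 (ltW l0)) l'V0.
have -> : (x / l) `^ l * (1 - l)^-1 `^ (1 - l) = x `^ l / (l `^ l * (1 - l) `^ (1 - l)).
  by rewrite powR_div // powRV // invfM mulrA.
have -> : l * (x / l) + (1 - l) / (1 - l) = 1 + x by field; rewrite !gt_eqF.
by rewrite ler_pdivrMr ?mulr_gt0 ?powR_gt0 // mulrC.
Qed.

Lemma C1_high_powR p : 0 < p -> 2 `^ (p / 2) = C1_high p `^ p * 2.
Proof.
move=> p0; rewrite /C1_high -powRrM.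
rewrite (_ : (2^-1 - p^-1) * p = p / 2 - 1); last by field; rewrite gt_eqF.
by rewrite powRB ?pnatr_eq0 ?implybT // powRr1 // divfK ?pnatr_eq0.
Qed.

Lemma C1_normalized_bound p a w : 0 < p < 1 -> 0 <= a <= 1 -> 0 <= w <= 1 ->
  a + (2 - a) * w `^ (2 / p) <= C1 p ^+ 2 * (1 + w + (1 - w) * a) `^ (2 / p).
Proof.
move=> p01 /andP[a0 a1] w01; have /andP[p0 p1] := p01; have /andP[w0 w1] := w01.
have q1 : 1 <= 2 / p by rewrite ler_pdivlMr // mul1r; lra.
have C1_low_le : C1_low p <= C1 p by rewrite C1E // le_max lexx.
have C1_high_le : C1_high p <= C1 p by rewrite C1E // le_max lexx orbT.
have := @powR_add_mul_le R (2 / p) a (2 - a) w q1 a0 (ltac:(lra)) w01.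
rewrite invf_div subrKC => /le_trans; apply.
have step : (1 - w) * a `^ (p / 2) + w * 2 `^ (p / 2) <= C1 p `^ p * (1 + w + (1 - w) * a).
  have la : a `^ (p / 2) <= C1 p `^ p * (1 + a).
    apply: le_trans (@powR_half_le_C1_low p a _ a0) _; first lra.
    rewrite ler_wpM2r //; first lra.
    by rewrite ler_powRl ?(ltW p0) // mulr_ge0 ?powR_ge0.
  have l2 : 2 `^ (p / 2) <= C1 p `^ p * 2.
    by rewrite C1_high_powR // ler_wpM2r ?ler_powRl ?(ltW p0) ?powR_ge0.
  have := lerD (ler_wpM2l (ltac:(lra) : 0 <= 1 - w) la) (ler_wpM2l w0 l2).
  by move/le_trans; apply; rewrite le_eqVlt; apply/orP; left; apply/eqP; ring.
apply: le_trans (@ler_powRl R (2 / p) _ _ _ _ step) _; first lra.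
  by rewrite addr_ge0 ?mulr_ge0 ?powR_ge0 //; lra.
rewrite powRM ?powR_powR_div ?gt_eqF ?powR_ge0 ?C1_ge0 //.
by rewrite addr_ge0 ?mulr_ge0 //; lra.
Qed.

Lemma chord_mean_bound p a s b X : 0 < p < 1 -> 0 <= a -> a <= s -> s <= b ->
  X <= a `^ (2 / p) + (b `^ (2 / p) - a `^ (2 / p)) / (b - a) * (s - a) ->
  X + a `^ (2 / p) <= C1 p ^+ 2 * (b + s) `^ (2 / p).
Proof.
move=> p01 a0 a_s sb hX; have /andP[p0 p1] := p01.
set q := 2 / p; have q0 : q != 0 by rewrite mulf_neq0 ?invr_eq0 ?gt_eqF.
have [b0|bneq0] := eqVneq b 0.
  have a00 : a = 0 by lra.
  have s00 : s = 0 by lra.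
  move: hX; rewrite b0 a00 s00 !powR0 // !subrr mulr0 !addr0 => /le_trans; apply.
  by rewrite powR0 // mulr0.
have b_gt0 : 0 < b by rewrite lt0r bneq0 (le_trans a0) // (le_trans a_s).
set w := a / b; set l := (s - a) / (b - a).
have w01 : 0 <= w <= 1 by rewrite divr_ge0 ?(ltW b_gt0) //= ler_pdivrMr // mul1r (le_trans a_s).
have ba0 : 0 <= b - a by lra.
have l01 : 0 <= l <= 1.
  have [a_eq_b|a_neq_b] := eqVneq a b.
    by rewrite /l a_eq_b subrr invr0 mulr0 lexx ler01.
  rewrite divr_ge0 // ?subr_ge0 //= ler_pdivrMr ?mul1r ?lerD2r //.
  by rewrite lt0r subr_eq0 eq_sym a_neq_b.
have bl : (b - a) * l = s - a.
  have [a_eq_b|a_neq_b] := eqVneq a b; first by rewrite /l a_eq_b !subrr mul0r; lra.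
  by rewrite /l mulrC divfK // subr_eq0 eq_sym.
have bw : b * w = a by rewrite /w mulrC divfK ?gt_eqF.
have ew : a `^ q = b `^ q * w `^ q.
  by rewrite -powRM ?bw ?(ltW b_gt0) //; case/andP: w01.
have es : b + s = b * (1 + w + (1 - w) * l).
  by transitivity (b + b * w + (b - b * w) * l); [rewrite bw bl; ring | ring].
apply: le_trans (_ : b `^ q * (l + (2 - l) * w `^ q) <= _).
  have -> : b `^ q * (l + (2 - l) * w `^ q) = a `^ q + (b `^ q - a `^ q) * l + a `^ q.
    by rewrite ew; ring.
  by rewrite lerD2r (le_trans hX) // mulrAC -mulrA.
have T0 : 0 <= 1 + w + (1 - w) * l by move: w01 l01 => /andP[? ?] /andP[? ?]; nra.
rewrite es (@powRM _ b) ?(ltW b_gt0) // mulrCA ler_wpM2l ?powR_ge0 //.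
exact: C1_normalized_bound.
Qed.

End ConstantC1.

Section MonotoneSequence.
Context {R : realType}.

Lemma ler_sum_nat_const (m n : nat) (F : nat -> R) (x : R) :
  (forall i, (m <= i < n)%N -> F i <= x) -> \sum_(m <= i < n) F i <= (n - m)%:R * x.
Proof. by move=> Fx; rewrite mulr_natl -sumr_const_nat; apply: ler_sum_nat. Qed.

Lemma ger_sum_nat_const (m n : nat) (F : nat -> R) (x : R) :
  (forall i, (m <= i < n)%N -> x <= F i) -> (n - m)%:R * x <= \sum_(m <= i < n) F i.
Proof. by move=> Fx; rewrite mulr_natl -sumr_const_nat; apply: ler_sum_nat. Qed.

Variables (p : R) (k : nat) (u : nat -> R).
Hypotheses (p01 : 0 < p < 1) (k_gt0 : (0 < k)%N).
Hypothesis u_dec :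
  forall i j, (1 <= i)%N -> (i <= j)%N -> (j <= 3 * k)%N -> u j <= u i.
Hypothesis u_ge0 : forall i, (1 <= i)%N -> (i <= 3 * k)%N -> 0 <= u i.

Let p_gt0 : 0 < p. Proof. by case/andP: p01. Qed.
Let p_ge0 : 0 <= p := ltW p_gt0.
Let p_neq0 : p != 0 := lt0r_neq0 p_gt0.

Let q := 2 / p.
Let q_ge1 : 1 <= q.
Proof. by rewrite /q ler_pdivlMr // mul1r; case/andP: p01 => _ p1; lra. Qed.
Let a := u (2 * k) `^ p.
Let b := u k.+1 `^ p.
Let sigma := \sum_(k.+1 <= i < (2 * k).+1) u i `^ p.

Lemma tail_sum_le :
  \sum_((2 * k).+1 <= i < (3 * k).+1) u i ^+ 2 <= k%:R * u (2 * k) ^+ 2.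
Proof.
apply: le_trans (@ler_sum_nat_const _ _ _ (u (2 * k) ^+ 2) _) _ => [i /andP[ki ik]|].
  by rewrite ler_sqr ?nnegrE ?u_ge0 ?u_dec //; lia.
by rewrite (_ : (_ - _ = k)%N) //; lia.
Qed.

Lemma head_sum_ge : k%:R * b <= \sum_(1 <= i < k.+1) u i `^ p.
Proof.
apply: le_trans (@ger_sum_nat_const _ _ _ b _) => [|i /andP[ki ik]].
  by rewrite subn1.
by rewrite ler_powRl ?p_ge0 ?u_ge0 ?u_dec //; lia.
Qed.

Lemma middle_range i : (k.+1 <= i < (2 * k).+1)%N -> u (2 * k) <= u i <= u k.+1.
Proof. by move=> /andP[ki ik]; rewrite !u_dec //; have := k_gt0; lia. Qed.

Lemma middle_powR_range i : (k.+1 <= i < (2 * k).+1)%N -> a <= u i `^ p <= b.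
Proof.
move=> hi; have /andP[ci iM] := middle_range _ hi; move: hi => /andP[ki ik].
by rewrite !ler_powRl ?p_ge0 ?u_ge0 ?(le_trans _ ci) ?u_ge0 //; have := k_gt0; lia.
Qed.

Lemma middle_sum_range : k%:R * a <= sigma <= k%:R * b.
Proof.
have cnt : ((2 * k).+1 - k.+1 = k)%N by lia.
apply/andP; split; rewrite -{1}cnt.
  by apply: ger_sum_nat_const => i /middle_powR_range /andP[].
by apply: ler_sum_nat_const => i /middle_powR_range /andP[].
Qed.

Lemma middle_chord_sum :
  \sum_(k.+1 <= i < (2 * k).+1) u i ^+ 2 <=
  k%:R * (a `^ q + (b `^ q - a `^ q) / (b - a) * (sigma / k%:R - a)).
Proof.
set slope := (b `^ q - a `^ q) / (b - a).
apply: le_trans (_ : \sum_(k.+1 <= i < (2 * k).+1) (a `^ q + slope * (u i `^ p - a)) <= _).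
  apply: ler_sum_nat => i hi; have /andP[ai ib] := middle_powR_range _ hi.
  have ui0 : 0 <= u i by move: hi => /andP[? ?]; rewrite u_ge0 //; have := k_gt0; lia.
  by rewrite -(@powR_powR_div _ 2 p) // powR_le_chord ?q_ge1 // powR_ge0.
rewrite big_split /= sumr_const_nat -mulr_sumr sumrB sumr_const_nat -/sigma.
have -> : ((2 * k).+1 - k.+1 = k)%N by rewrite subSS mulSn mul1n addnK.
have kneq0 : k%:R != 0 :> R by rewrite pnatr_eq0 -lt0n.
rewrite -[a `^ q *+ k]mulr_natl -[a *+ k]mulr_natl le_eqVlt.
by apply/orP; left; apply/eqP; field.
Qed.

Lemma sum_sq_le :
  \sum_(k.+1 <= i < (3 * k).+1) u i ^+ 2 <=
  C1 p ^+ 2 * k%:R `^ (1 - q) * (\sum_(1 <= i < (2 * k).+1) u i `^ p) `^ q.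
Proof.
have le_2k_3k : ((2 * k).+1 <= (3 * k).+1)%N by rewrite ltnS leq_mul2r leqnSn orbT.
have le_k_2k : (k.+1 <= (2 * k).+1)%N by rewrite ltnS leq_pmull.
rewrite (big_cat_nat le_k_2k le_2k_3k) (big_cat_nat (ltn0Sn k) le_k_2k) /= -/sigma.
set Q := \sum_(k.+1 <= i < (2 * k).+1) u i ^+ 2.
have k0 : 0 < k%:R :> R by rewrite ltr0n.
have a0 : 0 <= a := powR_ge0 _ _.
have /andP[ka kb] := middle_sum_range.
have := @chord_mean_bound R p a (sigma / k%:R) b (Q / k%:R) p01 a0.
rewrite ler_pdivlMr // ler_pdivrMr // ler_pdivrMr // !(mulrC _ k%:R).
move=> /(_ ka kb middle_chord_sum) mean.
apply: le_trans (_ : k%:R * (Q / k%:R + a `^ q) <= _).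
  rewrite mulrDr [k%:R * (Q / _)]mulrC divfK ?gt_eqF // lerD2l.
  by rewrite /a powR_powR_div ?tail_sum_le ?u_ge0 ?muln_gt0 ?leq_mul2r ?orbT.
apply: le_trans (ler_wpM2l (ltW k0) mean) _.
rewrite mulrCA -mulrA ler_wpM2l ?sqr_ge0 //.
have -> : b + sigma / k%:R = (k%:R * b + sigma) / k%:R by field; rewrite gt_eqF.
have kb0 : 0 <= k%:R * b + sigma by rewrite addr_ge0 ?mulr_ge0 ?powR_ge0 // (le_trans _ ka) ?mulr_ge0.
have -> : k%:R `^ (1 - q) = k%:R / k%:R `^ q.
  by rewrite powRB ?powRr1 ?(ltW k0) // pnatr_eq0 -lt0n k_gt0 implybT.
rewrite powR_div // mulrA mulrAC.
by rewrite ler_wpM2l ?divr_ge0 ?powR_ge0 ?(ltW k0) // ler_powRl ?lerD2r ?head_sum_ge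
  ?(le_trans ler01 q_ge1).
Qed.

End MonotoneSequence.

Theorem corollary5 (R : realType) (p : R) (k : nat) (u : nat -> R) :
  0 < p < 1 -> (0 < k)%N ->
  (forall i j, (1 <= i)%N -> (i <= j)%N -> (j <= 3 * k)%N -> u j <= u i) ->
  (forall i, (1 <= i)%N -> (i <= 3 * k)%N -> 0 <= u i) ->
  (\sum_(k.+1 <= i < (3 * k).+1) u i ^+ 2) `^ (2^-1)
  <= C1 p * (k%:R) `^ (2^-1 - p^-1)
     * (\sum_(1 <= i < (2 * k).+1) u i `^ p) `^ (p^-1).
Proof.
move=> p01 k_gt0 u_dec u_ge0; have /andP[p0 _] := p01.
have := @ler_powRl R 2^-1 _ _ (ltac:(by rewrite invr_ge0)) _ (sum_sq_le _ _ _ p01 k_gt0 u_dec u_ge0).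
rewrite sumr_ge0 => [/(_ isT)|i _]; last exact: sqr_ge0.
move=> /le_trans; apply.
have C0 := @C1_ge0 R p p01.
rewrite powRM; [|by rewrite mulr_ge0 ?sqr_ge0 ?powR_ge0|exact: powR_ge0].
rewrite powRM; [|exact: sqr_ge0|exact: powR_ge0].
rewrite -(@powR_mulrn _ (C1 p)) // -!powRrM mulfV ?pnatr_eq0 // powRr1 //.
have -> : (1 - 2 / p) / 2 = 2^-1 - p^-1 by field; rewrite gt_eqF.
by have -> : 2 / p / 2 = p^-1 by field; rewrite gt_eqF.
Qed.
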